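(* The binary word $101$ has an internal zero at $n=6$ and at no other $n\ge0$.
   Context: $c_p(w)$ is the number of occurrences of $p$ as a (not necessarily consecutive) subsequence of $w$; $B_{n,p}(k)$ is the number of binary words of length $n$ with $c_p(w)=k$. $p$ has an internal zero at $n$ if there exist $0\le k_1<k_2<k_3$ with $B_{n,p}(k_1)\ne0$, $B_{n,p}(k_2)=0$, $B_{n,p}(k_3)\ne0$. *)

From mathcomp Require Import all_boot.
Set Implicit Arguments. Unset Strict Implicit. Unset Printing Implicit Defensive.

(* Binary words: letters are bool, with false = 0 and true = 1. *)

(* c_p(w): number of occurrences of p as a (not necessarily consecutive)
   subsequence of w, i.e. number of index sets S (listed increasingly, as
   [enum S] is for ordinals) with the letters of w at S spelling p. *)
Definition occ (p w : seq bool) : nat :=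
  #|[set S : {set 'I_(size w)} |
      [seq nth false w (nat_of_ord i) | i <- enum S] == p]|.

Definition B (n : nat) (p : seq bool) (k : nat) : nat :=
  #|[set w : n.-tuple bool | occ p w == k]|.

Definition internal_zero (p : seq bool) (n : nat) : Prop :=
  exists k1 k2 k3 : nat, [/\ k1 < k2, k2 < k3,
    B n p k1 != 0, B n p k2 = 0 & B n p k3 != 0].

Definition w101 : seq bool := [:: true; false; true].

From Stdlib Require Import PeanoNat.
From mathcomp Require Import all_boot zify.
Set Implicit Arguments. Unset Strict Implicit. Unset Printing Implicit Defensive.

(* Write c101 w for the number of occurrences of 101 as a subsequence of w.
   The proof rests on two facts about the maximum
     cmax n := max_h (n - 2h) * h^2.
   Upper bound: a word with z zeros and m ones has c101 <= z * floor(m^2/4)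
   (each zero contributes (ones before) * (ones after)), and this is at most
   cmax n.  Interval property: for n <> 6 every value 0..cmax n occurs.  For
   n < 14 this is checked by enumerating all words.  For n >= 14 and
   cmax (n-1) < k <= cmax n, take h maximising (n - 2h) h^2 and z = n - 2h;
   inserting the zeros of 1^(2h) so that the i-th zero has h - j_i ones before
   it gives c101 = z h^2 - sum j_i^2, and maximality forces h >= 5 and
   z >= h - 1, so the deficit z h^2 - k < h^2 is a sum of z squares <= h^2.
   Values up to cmax (n-1) come from length n - 1 by prepending a zero.
   At n = 6 the values 4 and 8 occur but 5 does not, giving the internal zero. *)

(* Recursive count of occurrences of p as a subsequence of w: an occurrence
   either avoids the first letter of w or uses it for the first letter of p. *)
Fixpoint cnt (p w : seq bool) : nat :=
  match w with
  | [::] => p == [::]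
  | x :: w' => cnt p w' + (if p is a :: p' then (x == a) * cnt p' w' else 0)
  end.

Fixpoint words (n : nat) : seq (seq bool) :=
  if n is n'.+1 then map (cons true) (words n') ++ map (cons false) (words n')
  else [:: [::]].

Lemma cons_inj (b : bool) : injective (cons b).
Proof. by move=> ? ? []. Qed.

Lemma mem_words n w : (w \in words n) = (size w == n).
Proof.
elim: n w => [|n IH] [|x w]; rewrite ?inE //= mem_cat.
  by apply/negbTE/norP; split; apply/mapP => -[].
have notin b b' W : b != b' -> (b :: w \in map (cons b') W) = false.
  by move=> neq; apply/mapP => -[v _ [eb _]]; rewrite eb eqxx in neq.
by case: x; rewrite mem_map ?notin ?orbF ?IH //; exact: cons_inj.
Qed.

Lemma words_uniq n : uniq (words n).
Proof.
elim: n => //= n IH; rewrite cat_uniq !map_inj_uniq ?IH ?andbT //; try exact: cons_inj.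
by apply/hasPn => _ /mapP [w _ ->]; apply/mapP => -[].
Qed.

Lemma cnt_words p w : cnt p w = count (fun m => mask m w == p) (words (size w)).
Proof.
elim: w p => [|x w IH] p /=; first by rewrite eq_sym addn0.
rewrite count_cat !count_map addnC -IH; congr (_ + _).
case: p => [|a p] /=; first by rewrite (eq_count (a2 := pred0)) ?count_pred0.
rewrite IH; case: (boolP (x == a)) => xa; rewrite ?mul1n ?mul0n.
  by apply: eq_count => m /=; rewrite eqseq_cons xa.
by rewrite (eq_count (a2 := pred0)) ?count_pred0 // => m /=; rewrite eqseq_cons (negbTE xa).
Qed.

Definition bits n (S : {set 'I_n}) : seq bool := [seq i \in S | i <- enum 'I_n].

Lemma size_bits n (S : {set 'I_n}) : size (bits S) = n.
Proof. by rewrite size_map size_enum_ord. Qed.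

Lemma nth_bits n (S : {set 'I_n}) (i : 'I_n) : nth false (bits S) i = (i \in S).
Proof. by rewrite (nth_map i) ?size_enum_ord // nth_ord_enum. Qed.

Lemma bits_inj n : injective (@bits n).
Proof. by move=> S T eST; apply/setP => i; rewrite -!nth_bits eST. Qed.

Lemma bits_onto n w : size w = n -> exists S : {set 'I_n}, bits S = w.
Proof.
move=> sw; exists [set i : 'I_n | nth false w i].
apply: (eq_from_nth (x0 := false)) => [|i]; rewrite size_bits // => lt_in.
by rewrite (nth_bits _ (Ordinal lt_in)) inE.
Qed.

Lemma card_bits n (P : pred (seq bool)) :
  #|[set S : {set 'I_n} | P (bits S)]| = count P (words n).
Proof.
rewrite cardE -(size_map (@bits n)) -size_filter; apply: perm_size.
apply: uniq_perm; first by rewrite map_inj_uniq ?enum_uniq //; exact: bits_inj.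
  by rewrite filter_uniq ?words_uniq.
move=> w; rewrite mem_filter mem_words; apply/mapP/andP => [[S]|[Pw /eqP sw]].
  by rewrite mem_enum inE => PS ->; rewrite size_bits.
by have [S eSw] := bits_onto sw; exists S; rewrite ?mem_enum ?inE eSw.
Qed.

Lemma enum_bits w (S : {set 'I_(size w)}) :
  [seq nth false w (nat_of_ord i) | i <- enum S] = mask (bits S) w.
Proof.
rewrite /bits {1}/enum_mem -enumT filter_mask map_mask; congr (mask _ _).
transitivity (map (nth false w) (iota 0 (size w))).
  by rewrite -val_enum_ord -map_comp.
by rewrite map_nth_iota0 // take_size.
Qed.

Lemma occ_cnt p w : occ p w = cnt p w.
Proof.
rewrite /occ cnt_words -(card_bits _ (fun m => mask m w == p)).
by apply: eq_card => S; rewrite !inE enum_bits.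
Qed.

Definition ones (w : seq bool) : nat := cnt [:: true] w.
Definition c01 (w : seq bool) : nat := cnt [:: false; true] w.
Definition c101 (w : seq bool) : nat := cnt w101 w.
Definition zeros (w : seq bool) : nat := count negb w.
Arguments ones w : simpl never.
Arguments c01 w : simpl never.
Arguments c101 w : simpl never.

Lemma cnt_nil w : cnt [::] w = 1.
Proof. by elim: w => //= x w ->. Qed.

Lemma ones_cons x w : ones (x :: w) = ones w + x.
Proof. by rewrite /ones /= cnt_nil muln1; case: x. Qed.

Lemma c01_cons x w : c01 (x :: w) = c01 w + (~~ x) * ones w.
Proof. by rewrite /c01 /=; case: x. Qed.

Lemma c101_cons x w : c101 (x :: w) = c101 w + x * c01 w.
Proof. by rewrite /c101 /=; case: x. Qed.

Lemma size_zeros_ones w : size w = zeros w + ones w.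
Proof. by elim: w => //= x w IH; rewrite ones_cons IH; case: x => /=; lia. Qed.

(* floor(m^2/4), the largest product a * b with a + b = m. *)
Definition qsq (m : nat) : nat := m * m %/ 4.

Lemma mul_le_qsq a b : a * b <= qsq (a + b).
Proof. by rewrite leq_divRL // mulnC mulnn; apply: (nat_AGM2 a b).1. Qed.

(* The left side counts the occurrences of 101 in 1^a w; each zero of w
   lies in at most (ones before) * (ones after) <= qsq (a + ones w) of them. *)
Lemma c101_prefix_bound a w : c101 w + a * c01 w <= zeros w * qsq (a + ones w).
Proof.
elim: w a => [|x w IH] a; first by rewrite muln0.
rewrite c101_cons c01_cons ones_cons; case: x => /=.
  by have := IH a.+1; rewrite -addnA addn1 addSnnS mulSn; lia.
have := mul_le_qsq a (ones w); have := IH a; rewrite addn0; nia.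
Qed.

(* The maximal value of (n - 2h) * h^2: z = n - 2h zeros between two blocks
   of h ones.  It is the maximum of c101 on words of length n. *)
Definition cmax (n : nat) : nat := \max_(h <- iota 0 n.+1) ((n - 2 * h) * (h * h)).

Lemma cmax_ge n h : (n - 2 * h) * (h * h) <= cmax n.
Proof.
have [le_hn|lt_nh] := leqP h n; last by rewrite (_ : n - 2 * h = 0) //; lia.
by apply: (leq_bigmax_seq (P := xpredT)); rewrite // mem_iota.
Qed.

Lemma cmax_attained n : exists h, cmax n = (n - 2 * h) * (h * h).
Proof.
apply: (big_ind (fun v => exists h, v = (n - 2 * h) * (h * h))) => [|x y|h _] /=.
- by exists 0; rewrite !muln0.
- by move=> [hx ex] [hy ey]; have [_|_] := leqP x y; [exists hy | exists hx].
- by exists h.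
Qed.

(* With m = 2h + 1 ones, z * h (h + 1) is dominated by (z + 1) h^2 or by
   (z - 1) (h + 1)^2, so an odd number of ones is never better. *)
Lemma zeros_qsq_le_cmax z m : z * qsq m <= cmax (z + m).
Proof.
rewrite /qsq -(odd_double_half m); set h := m./2; case: (odd m) => /=.
  have -> : (1 + h.*2) * (1 + h.*2) %/ 4 = h * h + h by lia.
  have [le_zh|lt_hz] := leqP z h.
    by apply: leq_trans (cmax_ge _ h); rewrite (_ : _ - _ = z + 1); nia.
  by apply: leq_trans (cmax_ge _ h.+1); rewrite (_ : _ - _ = z - 1); nia.
rewrite (_ : h.*2 * h.*2 %/ 4 = h * h); last by lia.
by apply: leq_trans (cmax_ge _ h); rewrite (_ : _ - _ = z) //; lia.
Qed.

Lemma c101_le_cmax w : c101 w <= cmax (size w).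
Proof.
rewrite size_zeros_ones; apply: leq_trans (zeros_qsq_le_cmax _ _).
by have := c101_prefix_bound 0 w; rewrite mul0n addn0 add0n.
Qed.

(* ins i w inserts a zero into w right after its i-th one. *)
Fixpoint ins (i : nat) (w : seq bool) {struct w} : seq bool :=
  if i is i'.+1 then
    if w is x :: w' then (if x then true :: ins i' w' else false :: ins i w')
    else [:: false]
  else false :: w.

Lemma size_ins i w : size (ins i w) = (size w).+1.
Proof. by elim: w i => [|[] w IH] [|i] //=; rewrite IH. Qed.

Lemma ones_ins i w : ones (ins i w) = ones w.
Proof.
by elim: w i => [|[] w IH] [|i]; rewrite /= !ones_cons ?IH ?addn0.
Qed.

Lemma counts_ins i w : i <= ones w ->
  c01 (ins i w) = c01 w + (ones w - i) /\ c101 (ins i w) = c101 w + i * (ones w - i).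
Proof.
elim: w i => [|x w IH] [|i] le_iw; first by split.
- by move: le_iw; rewrite /ones.
- by rewrite /= c01_cons c101_cons /=; split; lia.
- move: le_iw; rewrite ones_cons; case: x => /= le_iw; rewrite !(c01_cons, c101_cons) ?ones_cons.
    by have [-> ->] := IH i (ltac:(lia)); split; lia.
  by have [-> ->] := IH i.+1 (ltac:(lia)); rewrite ones_ins; split; lia.
Qed.

Lemma counts_all_ones m :
  [/\ ones (nseq m true) = m, c01 (nseq m true) = 0 & c101 (nseq m true) = 0].
Proof.
elim: m => [|m [IH1 IH01 IH101]] //=.
by rewrite ones_cons c01_cons c101_cons IH1 IH01 IH101 addn1.
Qed.

Definition build (h : nat) (l : seq nat) : seq bool :=
  foldr (fun j w => ins (h - j) w) (nseq (2 * h) true) l.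

Lemma size_build h l : size (build h l) = 2 * h + size l.
Proof. by elim: l => [|j l IH] /=; rewrite ?size_nseq ?addn0 // size_ins IH addnS. Qed.

Lemma ones_build h l : ones (build h l) = 2 * h.
Proof.
by elim: l => [|j l IH] /=; [case: (counts_all_ones (2 * h)) => -> | rewrite ones_ins].
Qed.

(* A zero with h - j ones before it (and h + j after) contributes h^2 - j^2. *)
Lemma square_gap h j : j <= h -> (h - j) * (2 * h - (h - j)) + j * j = h * h.
Proof.
move=> le_jh; have [d ->] : exists d, h = j + d by exists (h - j); lia.
by rewrite addKn (_ : 2 * (j + d) - d = 2 * j + d); nia.
Qed.

Lemma c101_build h l : all (fun j => j <= h) l ->
  c101 (build h l) + sumn [seq j * j | j <- l] = size l * (h * h).
Proof.
elim: l => [|j l IH] /=; first by case: (counts_all_ones (2 * h)) => _ _ ->.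
move=> /andP [le_jh /IH {}IH].
have [_ ->] := @counts_ins (h - j) (build h l) (ltac:(rewrite ones_build; lia)).
by rewrite ones_build; have := square_gap le_jh; nia.
Qed.

Lemma four_squares_below_25 :
  let r := iota 0 5 in
  all (fun D => has (fun a => has (fun b => has (fun c => has (fun d =>
         a * a + b * b + c * c + d * d == D) r) r) r) r) (iota 0 25).
Proof. by vm_compute. Qed.

Lemma squares_below_25 D : D < 25 ->
  exists l, [/\ size l = 4, all (fun j => j <= 5) l & sumn [seq j * j | j <- l] = D].
Proof.
move=> lt_D25; have := allP four_squares_below_25 D; rewrite mem_iota => /(_ lt_D25).
have in_r x : x \in iota 0 5 -> x <= 5 by rewrite mem_iota; lia.
case/hasP=> a /in_r a5; case/hasP=> b /in_r b5; case/hasP=> c /in_r c5.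
case/hasP=> d /in_r d5 /eqP sum_abcd; exists [:: a; b; c; d].
by rewrite /= a5 b5 c5 d5 !addnA addn0 sum_abcd.
Qed.

Lemma sqrt_bounds D : Nat.sqrt D * Nat.sqrt D <= D < (Nat.sqrt D).+1 * (Nat.sqrt D).+1.
Proof. by have [/leP -> /ltP] := Nat.sqrt_specif D. Qed.

(* For h >= 5, every D < h^2 is a sum of h - 1 squares of numbers <= h:
   remove the largest square j^2 <= D, leaving less than 2h + 1 <= (h - 1)^2. *)
Lemma squares_decomposition h D : 5 <= h -> D < h * h ->
  exists l, [/\ size l = h.-1, all (fun j => j <= h) l & sumn [seq j * j | j <- l] = D].
Proof.
move=> le5h; have [k ->] : exists k, h = 5 + k by exists (h - 5); lia.
elim: k D => [|k IH] D lt_Dh; first exact: squares_below_25.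
set j := Nat.sqrt D; have /andP [lo hi] := sqrt_bounds D.
have [l [size_l all_l sum_l]] := IH (D - j * j) (ltac:(nia)).
exists (j :: l); rewrite /= size_l sum_l; split; first by lia.
  apply/andP; split; first by nia.
  by apply/allP => i /(allP all_l); lia.
by rewrite subnKC.
Qed.

Definition achievable (n k : nat) : Prop := exists2 w, size w = n & c101 w = k.

Lemma achievableE n k : achievable n k <-> k \in [seq c101 w | w <- words n].
Proof.
split=> [[w sw <-]|/mapP [w]]; first by rewrite map_f // mem_words sw.
by rewrite mem_words => /eqP sw ->; exists w.
Qed.

Lemma achievable_le_cmax n k : achievable n k -> k <= cmax n.
Proof. by case=> w <- <-; apply: c101_le_cmax. Qed.

Lemma achievable_cons0 n k : achievable n k -> achievable n.+1 k.
Proof. by case=> w sw cw; exists (false :: w); rewrite /= ?sw // c101_cons addn0. Qed.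

(* The construction, padded with zeros placed in the middle (j = 0). *)
Lemma achievable_build h z l : size l <= z -> all (fun j => j <= h) l ->
  achievable (2 * h + z) (z * (h * h) - sumn [seq j * j | j <- l]).
Proof.
move=> size_l all_l; pose l' := l ++ nseq (z - size l) 0.
have all_l' : all (fun j => j <= h) l' by rewrite all_cat all_l; apply/allP => j /nseqP [->].
have size_l' : size l' = z by rewrite size_cat size_nseq subnKC.
have sum_l' : sumn [seq j * j | j <- l'] = sumn [seq j * j | j <- l].
  by rewrite map_cat sumn_cat; elim: (z - size l) => [|m] /=; rewrite ?addn0.
exists (build h l'); first by rewrite size_build size_l'.
by rewrite -sum_l' -size_l' -(c101_build all_l') addnK.
Qed.

(* A maximiser h of (n - 2h) h^2 with n >= 14 is at least 5, and the number
   of zeros z = n - 2h is at least h - 1 (compare with h - 1 and h + 1). *)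
Lemma maximizer_bounds n h : 14 <= n -> 0 < n - 2 * h ->
  cmax n = (n - 2 * h) * (h * h) -> 5 <= h /\ h.-1 <= n - 2 * h.
Proof.
move=> le14n z_pos Eh; have lo := cmax_ge n h.-1; have hi := cmax_ge n h.+1.
rewrite Eh in lo hi; have [z Ez] : exists z, n = z + 2 * h by exists (n - 2 * h); lia.
rewrite {}Ez addnK in le14n lo hi *; split.
  case: (leqP 5 h) => // lt_h5; move: lt_h5 le14n hi {lo Eh z_pos}.
  by case: h => [|[|[|[|[|h]]]]] //= _; lia.
move: lo {le14n hi Eh z_pos}; case: h => [|h] //= lo.
by rewrite (_ : z + 2 * h.+1 - 2 * h = z + 2) in lo; nia.
Qed.

Lemma achievable_step n k : 13 <= n ->
  (forall k, k <= cmax n -> achievable n k) -> k <= cmax n.+1 -> achievable n.+1 k.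
Proof.
move=> le13n IH le_k; have [le_kn|lt_nk] := leqP k (cmax n); first exact/achievable_cons0/IH.
have [h Eh] := cmax_attained n.+1; rewrite Eh in le_k.
have z_pos : 0 < n.+1 - 2 * h.
  by move: le_k lt_nk; case: (_ - _) => //; rewrite mul0n leqn0 => /eqP ->.
have [le5h le_hz] : 5 <= h /\ h.-1 <= n.+1 - 2 * h.
  by apply: (maximizer_bounds _ z_pos Eh); lia.
have lt_Dh : (n.+1 - 2 * h) * (h * h) - k < h * h.
  have := cmax_ge n h; rewrite (_ : n - 2 * h = (n.+1 - 2 * h).-1); last by lia.
  by move: (n.+1 - 2 * h) z_pos le_k lt_nk => z; nia.
have [l [size_l all_l sum_l]] := squares_decomposition le5h lt_Dh.
have := @achievable_build h (n.+1 - 2 * h) l (ltac:(by rewrite size_l)) all_l.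
by rewrite sum_l subKn // subnKC //; lia.
Qed.

Definition covers (V : seq nat) (m : nat) : bool := all (fun k => k \in V) (iota 0 m.+1).

Lemma small_lengths_interval :
  all (fun n => (n == 6) || covers [seq c101 w | w <- words n] (cmax n)) (iota 0 14).
Proof. by rewrite /cmax unlock; vm_compute. Qed.

Lemma achievable_small n k : n < 14 -> n != 6 -> k <= cmax n -> achievable n k.
Proof.
move=> lt_n14 n_neq6 le_k; have := allP small_lengths_interval n.
rewrite mem_iota (negbTE n_neq6) => /(_ lt_n14) /allP /(_ k).
by rewrite mem_iota ltnS => /(_ le_k) /achievableE.
Qed.

Lemma achievable_interval n k : n != 6 -> k <= cmax n -> achievable n k.
Proof.
elim: n k => [|n IH] k n_neq6 le_k; first exact: achievable_small.
have [lt_n14|le14n] := ltnP n.+1 14; first exact: achievable_small.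
by apply: achievable_step le_k => // k' le_k'; apply: IH => //; lia.
Qed.

Lemma achievable_length6 : [/\ achievable 6 4, ~ achievable 6 5 & achievable 6 8].
Proof. by split; [apply/achievableE | move/achievableE | apply/achievableE]; vm_compute. Qed.

Lemma B_neq0 n k : B n w101 k != 0 <-> achievable n k.
Proof.
rewrite /B cards_eq0; split=> [/set0Pn [t]|[w sw cw]].
  by rewrite inE occ_cnt => /eqP <-; exists t; rewrite ?size_tuple.
by apply/set0Pn; exists (Tuple (introT eqP sw)); rewrite inE occ_cnt -cw.
Qed.

Theorem mainTheorem17 : forall n : nat, internal_zero w101 n <-> n = 6.
Proof.
move=> n; split=> [[k1 [k2 [k3 [_ lt_k23 _ B_k2 B_k3]]]] | ->].
  apply/eqP; apply: contraT => n_neq6.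
  have le_k3 := achievable_le_cmax ((B_neq0 n k3).1 B_k3).
  have := (B_neq0 n k2).2 (achievable_interval n_neq6 (ltnW (leq_trans lt_k23 le_k3))).
  by rewrite B_k2.
have [ach4 not_ach5 ach8] := achievable_length6.
exists 4, 5, 8; split=> //; try exact/B_neq0.
by apply/eqP/negPn/negP => /B_neq0 /not_ach5.
Qed.
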